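(* Let $d>1$ be an integer and write $d=2^n3^mb$ with $\gcd(b,6)=1$. Let $a$ be an integer with $0\le a<d$, and let $f$ be the multiplicative order of $3/2$ modulo $b$. Then for every positive integer $x$ not divisible by $3$ there exists an admissible vector $s\in\mathcal{E}(x)$ with $v_s(x)\equiv a\pmod d$ and $l(s)\le 2(b-1)f+n+1$.
   Context: Let $T_0^{-1}(x)=2x$ and $T_1^{-1}(x)=(2x-1)/3$, viewed as maps $\mathbb{Q}\to\mathbb{Q}$. For $s=(s_0,s_1,\dots,s_k)$ with $k\ge 0$ and all $s_i$ nonnegative integers, the length of $s$ is $l(s)=k$ and $v_s=T_0^{-s_0}\circ T_1^{-1}\circ T_0^{-s_1}\circ T_1^{-1}\circ\cdots\circ T_1^{-1}\circ T_0^{-s_k}$ (with $k$ occurrences of $T_1^{-1}$). The vector $s$ is admissible for a positive integer $x$ if $v_s(x)$ is a positive integer; $\mathcal{E}(x)$ denotes the set of vectors admissible for $x$. *)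

From HB Require Import structures.
From mathcomp Require Import all_boot all_order all_algebra.
Set Implicit Arguments. Unset Strict Implicit. Unset Printing Implicit Defensive.
Import Order.TTheory GRing.Theory Num.Theory.
Local Open Scope ring_scope.

Definition T0inv (x : rat) : rat := 2 * x.
Definition T1inv (x : rat) : rat := (2 * x - 1) / 3.

(* A vector s = (s_0, s_1, ..., s_k) is represented as s_0 :: [s_1; ...; s_k].
   v_s = T0^{-s_0} o T1^{-1} o T0^{-s_1} o ... o T1^{-1} o T0^{-s_k}. *)
Fixpoint vs_aux (s0 : nat) (t : seq nat) (x : rat) : rat :=
  match t with
  | [::] => iter s0 T0inv x
  | s1 :: t' => iter s0 T0inv (T1inv (vs_aux s1 t' x))
  end.

(* v_s for s : seq nat (s must be nonempty; the empty seq is not a vector) *)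
Definition vs (s : seq nat) (x : rat) : rat :=
  match s with
  | [::] => x
  | s0 :: t => vs_aux s0 t x
  end.

Definition len (s : seq nat) : nat := (size s).-1.

Definition admissible (x : nat) (s : seq nat) : Prop :=
  (0 < size s)%N /\ exists m : nat, (0 < m)%N /\ vs s x%:R = m%:R.

(* f is the multiplicative order of 3/2 modulo b (b coprime to 6):
   the least f > 0 with (3/2)^f = 1 mod b, i.e. 3^f = 2^f mod b. *)
Definition is_order32 (b f : nat) : Prop :=
  (0 < f)%N /\ 3 ^ f = 2 ^ f %[mod b] /\
  (forall g : nat, (0 < g)%N -> 3 ^ g = 2 ^ g %[mod b] -> (f <= g)%N).

From HB Require Import structures.
From mathcomp Require Import all_boot all_order all_algebra all_fingroup all_solvable.
From mathcomp Require Import zify ring.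
Set Implicit Arguments. Unset Strict Implicit. Unset Printing Implicit Defensive.
Import Order.TTheory GRing.Theory Num.Theory.
Local Open Scope ring_scope.

(* The vector s is built backwards from x: every entry performs a backward
   step u ↦ u' with 3u' + 1 = 2^(e+1) u (a power of T0^{-1} followed by
   T1^{-1}), and the residues of u' are steered modulo b and modulo 3^K.
   - Modulo b, a step whose exponent is ≡ α modulo O (where 2^O ≡ 1 mod b)
     is the affine map u ↦ (2^α u − 1)/3 of Z/bZ; the maps with α ∈ {0, 1}
     generate a transitive group, so every residue is reached within b − 1
     steps (btraj_reach, chain_reach).
   - Modulo 3^K, the exponent can be shifted by multiples of O: writing
     2^O = 1 + 3^(r+1) w with 3 ∤ w, the powers of 2^O are transitive on the
     residues ≡ 1 mod 3^(r+1) (lift_residue).  Choosing the 3-adic targets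
     backwards (back) yields the vector of realize, once x has the right
     residue modulo 3^(r+1); a prefix of r + 1 steps arranges this
     (two_pow_hits, back_ones).  Hence core_vector: length ≤ r + b, any
     residues modulo 3^m and modulo b.
   - The residue modulo 2^n is then fixed bit by bit, each bit costing at
     most one more entry (full_vector).
   The theorem follows by the Chinese remainder theorem, since O can be taken
   ≤ 2b, whence r + 2 ≤ 2b, and f ≥ 2 as soon as b > 1. *)

(* Congruences of integers, in the witness form a = b + k m, so that all
   congruence computations reduce to ring identities. *)
Definition cong (m a b : int) : Prop := exists k : int, a = b + k * m.

Lemma cong_refl m a : cong m a a.
Proof. by exists 0; ring. Qed.

Lemma cong_sym m a b : cong m a b -> cong m b a.
Proof. by case=> k ->; exists (- k); ring. Qed.

Lemma cong_trans m a b c : cong m a b -> cong m b c -> cong m a c.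
Proof. by case=> k ->; case=> l ->; exists (k + l); ring. Qed.

Lemma congM m a b c d : cong m a b -> cong m c d -> cong m (a * c) (b * d).
Proof. by case=> k ->; case=> l ->; exists (k * d + b * l + k * l * m); ring. Qed.

Lemma congX m a b n : cong m a b -> cong m (a ^+ n) (b ^+ n).
Proof.
move=> hab; elim: n => [|n IH]; first exact: cong_refl.
by rewrite !exprS; apply: congM.
Qed.

Lemma congZ c m a b : cong m a b -> cong (c * m) (c * a) (c * b).
Proof. by case=> k ->; exists k; ring. Qed.

Lemma cong_mulK c m a b : c != 0 -> cong (c * m) (c * a) (c * b) -> cong m a b.
Proof. by move=> c0 [k hk]; exists k; apply: (mulfI c0); rewrite hk; ring. Qed.

Lemma cong_cancel3 (M a b : int) : coprimez M 3 -> cong M (3 * a) (3 * b) -> cong M a b.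
Proof.
move=> hM [k hk].
have : (M %| (a - b) * 3)%Z by apply/dvdzP; exists k; rewrite mulrC mulrBr hk; ring.
by rewrite Gauss_dvdzl // => /dvdzP [q hq]; exists q; rewrite -hq; ring.
Qed.

Lemma cong_dvd m m' a b : cong (m * m') a b -> cong m a b.
Proof. by case=> k ->; exists (k * m'); ring. Qed.

Lemma cong_expn_le (p : int) (R K : nat) a b :
  (R <= K)%N -> cong (p ^+ K) a b -> cong (p ^+ R) a b.
Proof. by move=> hRK; rewrite -(subnKC hRK) exprD; apply: cong_dvd. Qed.

Lemma PoszX (n k : nat) : Posz (n ^ k) = Posz n ^+ k.
Proof. by rewrite -!natz natrX. Qed.

Lemma cong_nat (m x y : nat) : (x = y %[mod m])%N <-> cong m x y.
Proof.
split=> [h|[k hk]].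
  exists ((x %/ m)%:Z - (y %/ m)%:Z).
  by rewrite {1}(divn_eq x m) {1}(divn_eq y m) h !PoszD !PoszM; ring.
apply/eqP; rewrite -(@eqr_nat int) !natz -!modz_nat hk.
by rewrite addrC modzMDl.
Qed.

Lemma cong_nat_rep (M : nat) (γ : int) : (0 < M)%N -> exists g : nat, cong M g%:Z γ.
Proof.
move=> M_gt0; have M0 : M%:Z != 0 by rewrite eqz_nat -lt0n.
exists (absz (γ %% M)%Z); rewrite gez0_abs ?modz_ge0 //.
by exists (- (γ %/ M)%Z); rewrite {2}(divz_eq γ M); ring.
Qed.

Lemma half_exists (M : nat) : odd M -> exists h : int, 2 * h = 1 + M%:Z.
Proof.
move=> oM; exists (M.+1)./2%:Z.
have e : ((M.+1)./2 * 2 = M.+1)%N.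
  by rewrite -{2}(odd_double_half M.+1) /= oM add0n -mul2n mulnC.
by rewrite mulrC -PoszM e -addn1 PoszD addrC.
Qed.

Lemma inv2_pow3 K : exists inv : int, 2 * inv = 1 + 3 ^+ K.
Proof.
have odd3K : odd (3 ^ K) by rewrite oddX orbT.
by have [h hh] := half_exists odd3K; exists h; rewrite hh PoszX.
Qed.

Lemma coprime6P b : coprime b 6 -> coprime b 2 /\ coprime b 3.
Proof. by rewrite (_ : 6 = 2 * 3)%N // coprimeMr => /andP. Qed.

Lemma unit3_sq (w : nat) : ~~ (3 %| w)%N -> cong 3 (w%:Z * w%:Z) 1.
Proof.
move=> w3; rewrite -PoszM; apply/(cong_nat 3 _ 1); rewrite -modnMm.
have : (w %% 3 < 3)%N by rewrite ltn_pmod.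
by move: w3; rewrite /dvdn; case: (w %% 3)%N => [|[|[|]]].
Qed.

Lemma pow3_unit_lift (g w : int) (r : nat) : g = 1 + 3 ^+ r.+1 * w ->
  forall i, exists wi, g ^+ (3 ^ i)%N = 1 + 3 ^+ (r.+1 + i) * wi /\ cong 3 wi w.
Proof.
move=> hg; elim=> [|i [wi [hi [k hk]]]].
  by exists w; rewrite expn0 expr1 addn0; split=> //; apply: cong_refl.
pose X : int := 3 ^+ (r + i).
have eX : 3 ^+ (r.+1 + i) = 3 * X by rewrite addSn exprS.
exists (wi + 3 * X * wi ^+ 2 + X * (3 * X) * wi ^+ 3); split.
  by rewrite expnSr exprM hi addnS (exprS _ (r.+1 + i)) eX; ring.
by exists (k + X * wi ^+ 2 + X * X * wi ^+ 3); rewrite hk; ring.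
Qed.

Lemma pow_first_order (X w : int) (e : nat) :
  cong (9 * X) ((1 + 3 * X * w) ^+ e) (1 + e%:R * (3 * X * w)).
Proof.
elim: e => [|e [k hk]]; first by exists 0; rewrite expr0; ring.
by exists (e%:R * X * w ^+ 2 + k * (1 + 3 * X * w)); rewrite exprS hk -addn1 natrD; ring.
Qed.

Lemma lift_digit (X w p z : int) : cong 3 (w * w) 1 -> cong 3 p 1 ->
  cong (3 * X) p z -> exists e : nat, cong (9 * X) ((1 + 3 * X * w) ^+ e * p) z.
Proof.
move=> [a ha] [c hc] [k hk].
pose e := absz ((- k * w) %% 3)%Z.
have [q hq] : exists q : int, (e%:R : int) = - k * w + q * 3.
  exists (- ((- k * w) %/ 3)%Z).
  by rewrite /e natz gez0_abs ?modz_ge0 // {2}(divz_eq (- k * w) 3); ring.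
have hwp : w * w * p = 1 + 3 * (a + c + 3 * a * c) by rewrite ha hc; ring.
have [j hj] := pow_first_order X w e.
exists e; exists (j * p + q * w * p - k * (a + c + 3 * a * c)).
have -> : z = p - k * (3 * X) by rewrite hk; ring.
rewrite hj hq.
transitivity (p + 3 * X * (- k) * (w * w * p) + 9 * X * (j * p + q * w * p)); first ring.
by rewrite hwp; ring.
Qed.

Lemma lift_residue (g w : int) (r : nat) :
  g = 1 + 3 ^+ r.+1 * w -> cong 3 (w * w) 1 ->
  forall i (y z : int), cong 3 y 1 -> cong (3 ^+ r.+1) y z ->
  exists t : nat, cong (3 ^+ (r.+1 + i)) (g ^+ t * y) z.
Proof.
move=> hg hw; elim=> [|i IH] y z hy hyz.
  by exists 0%N; rewrite addn0 expr0 mul1r.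
have [t ht] := IH y z hy hyz.
have [wi [hgi [k hk]]] := pow3_unit_lift hg i.
have hwi : cong 3 (wi * wi) 1 by apply: cong_trans hw; apply: congM; exists k.
have hg1 : cong 3 g 1 by rewrite hg exprS; exists (3 ^+ r * w); ring.
have hp : cong 3 (g ^+ t * y) 1 by have := congM (congX t hg1) hy; rewrite expr1n mul1r.
pose X : int := 3 ^+ (r + i).
have eX : 3 ^+ (r.+1 + i) = 3 * X by rewrite addSn exprS.
rewrite eX in hgi ht.
have [e he] := lift_digit hwi hp ht.
exists (t + 3 ^ i * e)%N.
have e9 : 3 ^+ (r.+1 + i.+1) = 9 * X by rewrite /X addnS addSn !exprS mulrA.
by rewrite e9 exprD exprM hgi (mulrC (g ^+ t)) -(mulrA _ (g ^+ t)).
Qed.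

(* 2 is a primitive root modulo every 3^R: some 2^q x is ≡ −2 (mod 3^R). *)
Lemma two_pow_hits (x R : nat) : ~~ (3 %| x)%N -> (0 < R)%N ->
  exists q : nat, cong (3 ^+ R) (2 ^+ q * x%:Z) (-2).
Proof.
move=> x3 R_gt0.
have [q0 hq0] : exists q0 : nat, cong 3 (2 ^+ q0 * x%:Z) 1.
  have : (x %% 3 < 3)%N by rewrite ltn_pmod.
  move: x3 (cong_nat 3 x (x %% 3)); rewrite /dvdn modn_mod.
  case: (x %% 3)%N => [|[|[|//]]] // _ [/(_ erefl) hx] _.
    by exists 0%N; rewrite mul1r.
  exists 1%N; rewrite expr1; apply: (cong_trans (congM (cong_refl 3 2) hx)).
  by exists 1; ring.
have h4 : (2 : int) ^+ 2 = 1 + 3 ^+ 0.+1 * 1 by [].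
have [t ht] := lift_residue h4 (cong_refl 3 (1 * 1)) R.-1 hq0
  (cong_trans (hq0 : cong (3 ^+ 1) _ _) (ex_intro _ 1 erefl : cong (3 ^+ 1) 1 (-2))).
exists (2 * t + q0)%N; move: ht; rewrite add1n prednK // -exprM.
by rewrite exprD mulrA.
Qed.

Lemma totient_leq n : (totient n <= n)%N.
Proof.
rewrite totient_count_coprime.
have : (\sum_(0 <= d < n) (coprime n d : nat) <= \sum_(0 <= d < n) 1)%N.
  by apply: leq_sum => i _; exact: leq_b1.
by rewrite sum_nat_const_nat subn0 muln1.
Qed.

(* The period O of the construction: 2^O ≡ 1 (mod b), O ≤ 2b (Euler), and
   2^O = 1 + 3^(r+1) w with 3 ∤ w; the 3-adic valuation r + 1 is < O. *)
Lemma two_pow_decomposition (b : nat) : coprime b 2 -> (0 < b)%N ->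
  exists O r (w : int), [/\ (0 < O)%N, (2 ^ O = 1 %[mod b])%N,
    (2 : int) ^+ O = 1 + 3 ^+ r.+1 * w, cong 3 (w * w) 1 & (r.+2 <= 2 * b)%N].
Proof.
move=> b_cop2 b_gt0.
pose O := (totient b * 2)%N.
have tb_gt0 : (0 < totient b)%N by rewrite totient_gt0.
have hOb : (2 ^ O = 1 %[mod b])%N.
  by rewrite /O expnM -modnXm Euler_exp_totient 1?coprime_sym // modnXm exp1n.
have O_le : (O <= 2 * b)%N by rewrite /O mulnC leq_mul2l totient_leq orbT.
have O3 : (2 ^ O = 1 %[mod 3])%N.
  by rewrite /O mulnC expnM -modnXm (_ : 2 ^ 2 %% 3 = 1)%N // exp1n.
pose N := (2 ^ O).-1.
have eN : (2 ^ O = N.+1)%N by rewrite prednK // expn_gt0.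
have N_gt0 : (0 < N)%N.
  have : (2 ^ 2 <= 2 ^ O)%N by rewrite leq_exp2l // /O; lia.
  rewrite eN; lia.
have N3 : (3 %| N)%N.
  have : (N + 1 == 0 + 1 %[mod 3])%N by rewrite addn1 -eN add0n O3.
  by rewrite eqn_modDr mod0n.
have [w w_cop eNw] := pfactor_coprime (isT : prime 3) N_gt0.
set R := logn 3 N in eNw.
have R_gt0 : (0 < R)%N by rewrite -(pfactor_dvdn 1 (isT : prime 3) N_gt0) expn1.
have R_lt : (R < O)%N.
  have h1 : (3 ^ R <= N)%N by rewrite dvdn_leq // eNw dvdn_mull.
  have h2 : (2 ^ O <= 3 ^ O)%N by rewrite leq_exp2r // /O; lia.
  by rewrite -(ltn_exp2l _ _ (isT : (1 < 3)%N)); lia.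
exists O, R.-1, w%:Z; split => //.
- by rewrite /O; lia.
- rewrite prednK // -[2 : int]/(Posz 2) -[3 : int]/(Posz 3) -!PoszX.
  by rewrite eN eNw -PoszM -addn1 PoszD addrC mulnC.
- by apply: unit3_sq; rewrite -prime_coprime.
- by rewrite prednK //; lia.
Qed.

Lemma pre_closed (T : finType) (g : T -> T) (S : {set T}) :
  injective g -> g @: S \subset S -> forall z, g z \in S -> z \in S.
Proof.
move=> g_inj gS z gzS.
have e : g @: S = S by apply/eqP; rewrite eqEcard gS (card_imset _ g_inj) leqnn.
by rewrite -e (mem_imset _ _ g_inj) in gzS.
Qed.

(* [step_mod b α u u']: modulo b, u' is the image of u under a backward step
   of exponent α, i.e. 3u' + 1 ≡ 2^α u; [chain_mod] iterates it along αs. *)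
Definition step_mod (b α u u' : nat) : Prop := (3 * u' + 1 = 2 ^ α * u %[mod b])%N.

Fixpoint chain_mod (b : nat) (αs : seq nat) (u v : nat) : Prop :=
  if αs is α :: αs' then exists u', step_mod b α u u' /\ chain_mod b αs' u' v
  else (v = u %[mod b])%N.

Section ResidueDynamics.
Variable b : nat.
Hypotheses (b_gt1 : (1 < b)%N) (b_cop6 : coprime b 6).

Let unit2 : (2 : 'Z_b) \is a GRing.unit.
Proof. by rewrite unitZpE //; case: (coprime6P b_cop6). Qed.

Let unit3 : (3 : 'Z_b) \is a GRing.unit.
Proof. by rewrite unitZpE //; case: (coprime6P b_cop6). Qed.

Definition bstep (α : nat) (u : 'Z_b) : 'Z_b := (2 ^+ α * u - 1) / 3.

Definition btraj (αs : seq nat) (u : 'Z_b) : 'Z_b :=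
  foldl (fun u α => bstep α u) u αs.

Lemma bstep0_inj : injective (bstep 0).
Proof.
move=> u v; rewrite /bstep expr0 !mul1r.
by move/(congr1 (fun z => z * 3)); rewrite !(divrK unit3) => /addIr.
Qed.

(* A set containing z0 and stable under bstep 0 and bstep 1 is everything:
   it is also stable under z ↦ 2z, z ↦ 3z + 1, z ↦ z/2, hence under
   z ↦ z + 1 = 2 (3 (bstep 0 z / 2) + 1). *)
Lemma closed_full (S : {set 'Z_b}) z0 : z0 \in S ->
  bstep 0 @: S \subset S -> bstep 1 @: S \subset S -> S = setT.
Proof.
move=> z0S S0 S1.
have closed f z : f @: S \subset S -> z \in S -> f z \in S.
  by move=> fS zS; apply: (subsetP fS); apply: imset_f.
have dbl z : z \in S -> 2 * z \in S.
  move=> zS; apply: (pre_closed bstep0_inj S0).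
  by rewrite (_ : bstep 0 _ = bstep 1 z) ?closed // /bstep expr0 expr1 mul1r.
have dbl_inj : injective (fun z : 'Z_b => 2 * z) := mulrI unit2.
have dblS : (fun z => 2 * z) @: S \subset S.
  by apply/subsetP => y /imsetP [z zS ->]; apply: dbl.
have aff z : z \in S -> 3 * z + 1 \in S.
  move=> zS; apply: (pre_closed bstep0_inj S0).
  by rewrite /bstep expr0 mul1r addrK mulrC mulKr.
have succ z : z \in S -> z + 1 \in S.
  move=> zS; set t := bstep 0 z / 2.
  have ht : z - 1 = t * 2 * 3 by rewrite /t /bstep expr0 mul1r !divrK.
  rewrite -(subrK 1 z) ht (_ : _ + 1 + 1 = 2 * (3 * t + 1)); last by ring.
  apply/dbl/aff/(pre_closed dbl_inj dblS).
  by rewrite mulrC divrK // closed.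
have shift k : z0 + k%:R \in S.
  by elim: k => [|k IH]; rewrite ?addr0 // mulrSr addrA succ.
apply/setP => z; rewrite inE.
by rewrite -(subrK z0 z) addrC -[z - z0]natr_Zp shift.
Qed.

Fixpoint layer (z0 : 'Z_b) (k : nat) : {set 'Z_b} :=
  if k is k'.+1 then layer z0 k' :|: bstep 0 @: layer z0 k' :|: bstep 1 @: layer z0 k'
  else [set z0].

Lemma layer_sub z0 k : layer z0 k \subset layer z0 k.+1.
Proof. by rewrite /= -setUA subsetUl. Qed.

Lemma layer_root z0 k : z0 \in layer z0 k.
Proof. by elim: k => [|k IH]; [rewrite set11 | apply: (subsetP (layer_sub z0 k))]. Qed.

Lemma layer_grow z0 k : layer z0 k = setT \/ (k < #|layer z0 k|)%N.
Proof.
elim: k => [|k [IH|IH]]; first by right; rewrite cards1.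
  by left; apply/eqP; rewrite eqEsubset subsetT -IH layer_sub.
have [e|ne] := eqVneq (layer z0 k.+1) (layer z0 k).
  left; rewrite e; apply: (closed_full (layer_root z0 k)).
    by rewrite -{2}e /= -setUA; apply: subset_trans (subsetUr _ _); apply: subsetUl.
  by rewrite -{2}e /= subsetUr.
right; apply: (leq_ltn_trans IH); apply: proper_card.
by rewrite properEneq eq_sym ne layer_sub.
Qed.

Lemma layer_traj z0 k z : z \in layer z0 k ->
  exists αs, (size αs <= k)%N /\ btraj αs z0 = z.
Proof.
elim: k z => [|k IH] z /=; first by rewrite inE => /eqP ->; exists [::].
rewrite !inE => /orP [/orP [zk|/imsetP [y yk ->]]|/imsetP [y yk ->]].
- by have [αs [h1 h2]] := IH z zk; exists αs; split => //; apply: leqW.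
- have [αs [h1 h2]] := IH y yk; exists (rcons αs 0%N).
  by rewrite size_rcons /btraj foldl_rcons -/(btraj αs z0) h2.
- have [αs [h1 h2]] := IH y yk; exists (rcons αs 1%N).
  by rewrite size_rcons /btraj foldl_rcons -/(btraj αs z0) h2.
Qed.

Lemma btraj_reach (z0 z : 'Z_b) : exists αs, (size αs <= b.-1)%N /\ btraj αs z0 = z.
Proof.
apply: layer_traj; suff -> : layer z0 b.-1 = setT by rewrite inE.
case: (layer_grow z0 b.-1) => // hk.
have cardZ : #|[set: 'Z_b]| = b by have := card_Zp (ltnW b_gt1); rewrite /Zp b_gt1.
rewrite (ltn_predK b_gt1) in hk.
by apply/eqP; rewrite eqEcard subsetT cardZ.
Qed.

Lemma step_mod_bstep α u u' : step_mod b α u u' -> (u'%:R : 'Z_b) = bstep α u%:R.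
Proof.
move=> h; have : ((3 * u' + 1)%:R : 'Z_b) = (2 ^ α * u)%:R.
  by rewrite -Zp_nat_mod // h Zp_nat_mod.
by rewrite natrD !natrM natrX /bstep => <-; rewrite addrK mulrC mulKr.
Qed.

Lemma chain_btraj αs u v : chain_mod b αs u v -> (v%:R : 'Z_b) = btraj αs u%:R.
Proof.
elim: αs u => [|α αs IH] u /=; first by move=> h; rewrite -Zp_nat_mod // h Zp_nat_mod.
by case=> u' [/step_mod_bstep hu' /IH ->]; rewrite hu'.
Qed.

End ResidueDynamics.

Lemma chain_reach (b : nat) : coprime b 6 -> (0 < b)%N -> forall (l : seq nat) (u γ : nat),
  exists αs, (size αs <= b.-1)%N /\
    forall v, chain_mod b (l ++ αs) u v -> (v = γ %[mod b])%N.
Proof.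
move=> b_cop6; rewrite leq_eqVlt => /orP [/eqP <- | b_gt1] l u γ.
  by exists [::]; split=> // v; rewrite !modn1.
have [αs [hsize htraj]] := btraj_reach b_gt1 b_cop6 (btraj l u%:R) γ%:R.
exists αs; split=> // v /(chain_btraj b_gt1 b_cop6).
rewrite /btraj foldl_cat -/(btraj l _) -/(btraj αs _) htraj.
by move/(congr1 (@nat_of_ord _)); rewrite !val_Zp_nat.
Qed.

Lemma iter_T0inv s (n : nat) : iter s T0inv n%:R = (2 ^ s * n)%N%:R.
Proof.
elim: s => [|s IH]; first by rewrite /= mul1n.
by rewrite iterS IH /T0inv expnS -mulnA !natrM.
Qed.

Lemma T1inv_nat (u y : nat) : (3 * u + 1 = 2 * y)%N -> T1inv y%:R = u%:R.
Proof.
move=> h; have : ((3 * u + 1)%N%:R : rat) = (2 * y)%N%:R by rewrite h.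
by rewrite natrD !natrM => e; rewrite /T1inv -e; field.
Qed.

Lemma vs_aux_rcons s0 t e (y : rat) :
  vs_aux s0 (rcons t e) y = vs_aux s0 t (T1inv (iter e T0inv y)).
Proof. by elim: t s0 => [|s1 t IH] s0 //=; rewrite IH. Qed.

Lemma vs_T0 s0 t x (v : nat) : vs (s0 :: t) x = v%:R -> vs (s0.+1 :: t) x = (2 * v)%N%:R.
Proof.
have vs_auxS : vs_aux s0.+1 t x = T0inv (vs_aux s0 t x).
  by case: t => [|s1 t] //=; rewrite iterS.
by rewrite /vs vs_auxS => ->; rewrite /T0inv natrM.
Qed.

Lemma vs_T1 s x (y u : nat) : (0 < size s)%N -> vs s x = y%:R ->
  (3 * u + 1 = 2 * y)%N -> vs (0%N :: s) x = u%:R.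
Proof. by case: s => // s0 t _ /= hy hu; rewrite hy; apply: T1inv_nat. Qed.

Lemma pow2_period (b O α t : nat) :
  (2 ^ O = 1 %[mod b])%N -> (2 ^ (α + O * t) = 2 ^ α %[mod b])%N.
Proof. by move=> hO; rewrite expnD expnM -modnMmr -modnXm hO modnXm exp1n modnMmr muln1. Qed.

Lemma T1_preimage (y : nat) : (0 < y)%N -> cong 3 (2 * y%:Z) 1 ->
  exists u : nat, (0 < u)%N /\ (3 * u + 1 = 2 * y)%N.
Proof.
move=> y_gt0 [[u|n] hu]; last by move: hu; rewrite NegzE; lia.
exists u; split; first by lia.
by apply/eqP; rewrite -(eqr_nat int) natrD !natrM !natz hu; apply/eqP; ring.
Qed.

Section BackwardConstruction.
Variables (b O r K : nat) (w inv : int).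
Hypotheses (hO : (2 ^ O = 1 %[mod b])%N) (O_gt0 : (0 < O)%N)
  (hg : (2 : int) ^+ O = 1 + 3 ^+ r.+1 * w) (hw : cong 3 (w * w) 1)
  (hK : (r.+1 <= K)%N) (hinv : 2 * inv = 1 + 3 ^+ K).
Local Notation R := r.+1.

(* [back αs σ]: the residue modulo 3^K that the starting value must have for
   the steps αs to end at σ, each step u ↦ u' being u ≡ (3u' + 1)/2^α. *)
Definition back (αs : seq nat) (σ : int) : int :=
  foldr (fun α s => (3 * s + 1) * inv ^+ α) σ αs.

Lemma cong_2inv n : cong (3 ^+ K) ((2 * inv) ^+ n) 1.
Proof.
have h2 : cong (3 ^+ K) (2 * inv) 1 by exists 1; rewrite hinv mul1r.
by have := congX n h2; rewrite expr1n.
Qed.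

Lemma backward_step α (u : nat) (σ' : int) : (0 < u)%N ->
  cong (3 ^+ R) (2 ^+ α * u%:Z) (3 * σ' + 1) ->
  exists e u', [/\ (0 < u')%N, (3 * u' + 1 = 2 ^ e.+1 * u)%N,
    step_mod b α u u' & cong (3 ^+ K) u'%:Z σ'].
Proof.
move=> u_gt0 hu.
have hgR : cong (3 ^+ R) (2 ^+ O) 1 by rewrite hg; exists w; ring.
pose y := 2 ^+ O * (2 ^+ α * u%:Z).
have hy : cong (3 ^+ R) y (3 * σ' + 1) by have := congM hgR hu; rewrite mul1r.
have hy3 : cong 3 y 1.
  apply: (cong_trans (cong_expn_le (isT : (1 <= R)%N) hy)).
  by exists σ'; rewrite expr1; ring.
have [t ht] := lift_residue hg hw (K.+1 - R) hy3 hy.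
rewrite subnKC in ht; last exact: leqW.
pose a := (α + O * t.+1)%N.
have ea : (2 : int) ^+ O ^+ t * y = 2 ^+ a * u%:Z.
  by rewrite /y /a mulnS !exprD exprM; ring.
rewrite ea in ht; case: ht => k hk.
pose U := σ' + k * 3 ^+ K.
have hU : 3 * U + 1 = 2 ^+ a * u%:Z by rewrite hk /U exprS; ring.
have a_gt0 : (0 < a)%N by rewrite /a addn_gt0 muln_gt0 O_gt0 orbT.
have U_ge1 : 1 <= U.
  have h2a : (2 ^ 1 * 1 <= 2 ^ a * u)%N by rewrite leq_mul // leq_pexp2l.
  move: h2a; rewrite -(ler_nat int) !natrM !natrX [u%:R]natz; lia.
have eU : Posz `|U|%N = U by rewrite gez0_abs //; lia.
have hnat : (3 * `|U| + 1 = 2 ^ a * u)%N.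
  by apply/eqP; rewrite -(eqr_nat int) !natz PoszD PoszM eU PoszM PoszX hU.
exists a.-1, `|U|%N; split.
- by rewrite -ltz_nat eU; lia.
- by rewrite prednK.
- by rewrite /step_mod hnat -modnMml pow2_period // modnMml.
- by rewrite eU; exists k.
Qed.

Lemma realize_step α (u : nat) (σ' : int) : (0 < u)%N ->
  cong (3 ^+ R) u%:Z ((3 * σ' + 1) * inv ^+ α) ->
  exists e u', [/\ (0 < u')%N, T1inv (iter e T0inv u%:R) = u'%:R,
    step_mod b α u u' & cong (3 ^+ K) u'%:Z σ'].
Proof.
move=> u_gt0 hu.
have hst : cong (3 ^+ R) (2 ^+ α * u%:Z) (3 * σ' + 1).
  apply: (cong_trans (congM (cong_refl _ (2 ^+ α)) hu)); rewrite mulrCA.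
  have := cong_expn_le hK (congM (cong_refl _ (3 * σ' + 1)) (cong_2inv α)).
  by rewrite mulr1 exprMn.
have [e [u' [u'_gt0 he hstep hu']]] := backward_step u_gt0 hst.
exists e, u'; split => //.
by rewrite iter_T0inv; apply: T1inv_nat; rewrite he expnS -mulnA.
Qed.

Lemma realize rest : forall α (u0 : nat) (σ : int), (0 < u0)%N ->
  cong (3 ^+ R) u0%:Z (back (α :: rest) σ) ->
  exists t uk, [/\ size t = (size rest).+1, (0 < uk)%N,
    (forall s0, vs_aux s0 t u0%:R = (2 ^ s0 * uk)%N%:R),
    cong (3 ^+ K) uk%:Z σ & chain_mod b (α :: rest) u0 uk].
Proof.
elim: rest => [|β rest IH] α u0 σ u0_gt0 hu0;
  have [e [u1 [u1_gt0 hvs1 hstep hu1]]] := realize_step u0_gt0 hu0.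
- exists [:: e], u1; split => //; last by exists u1.
  by move=> s0; rewrite /= hvs1 iter_T0inv.
- have [t [uk [ht uk_gt0 hvs hσ hchain]]] := IH β u1 σ u1_gt0 (cong_expn_le hK hu1).
  exists (rcons t e), uk; split => //; last by exists u1.
  + by rewrite size_rcons ht.
  + by move=> s0; rewrite vs_aux_rcons hvs1 hvs.
Qed.

(* −1 is fixed by u' ↦ (3u' + 1)/2: i exponents 1 make the target ≡ −1 mod 3^i. *)
Lemma back_ones i l σ : (i <= K)%N -> cong (3 ^+ i) (back (nseq i 1%N ++ l) σ) (-1).
Proof.
elim: i => [|i IH] hi; first by exists (back l σ + 1); rewrite expr0; ring.
have [k hk] := IH (ltnW hi).
rewrite /= -/(back (nseq i 1%N ++ l) σ) hk.
exists (k * inv - 3 ^+ (K - i.+1)).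
have eK : 3 ^+ K = 3 ^+ i.+1 * 3 ^+ (K - i.+1) :> int by rewrite -exprD subnKC.
transitivity (- (2 * inv) + 3 ^+ i.+1 * k * inv); first by rewrite expr1 exprS; ring.
by rewrite hinv eK; ring.
Qed.

End BackwardConstruction.

Lemma double_residue (M v γ h : int) :
  cong M (2 * h) 1 -> cong M v (γ * h) -> cong M (2 * v) γ.
Proof.
move=> [k hk] [l hl]; exists (γ * k + 2 * l).
by rewrite hl; transitivity (γ * (2 * h) + 2 * l * M); [ring | rewrite hk; ring].
Qed.

Lemma T1_residue (M u y γ : int) :
  3 * u + 1 = 2 * y -> cong M (2 * y) (3 * γ + 1) -> cong M (3 * u) (3 * γ).
Proof. by move=> <- [k hk]; exists k; apply: (addIr 1); rewrite hk; ring. Qed.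

Section Construction.
Variables (b O r : nat) (w : int) (x : nat).
Hypotheses (b_cop6 : coprime b 6) (b_gt0 : (0 < b)%N)
  (hO : (2 ^ O = 1 %[mod b])%N) (O_gt0 : (0 < O)%N)
  (hg : (2 : int) ^+ O = 1 + 3 ^+ r.+1 * w) (hw : cong 3 (w * w) 1)
  (x_gt0 : (0 < x)%N) (x3 : ~~ (3 %| x)%N).

(* Any residues modulo 3^m and b, with length at most r + 1 + (b − 1): a
   first exponent q with 2^q x ≡ −2 and r exponents 1 match the 3-adic
   target of [back], then at most b − 1 exponents steer the residue mod b. *)
Lemma core_vector (m : nat) (γ3 γb : int) : exists s, [/\ (0 < size s)%N,
  (len s <= r.+1 + b.-1)%N & exists v : nat, [/\ (0 < v)%N, vs s x%:R = v%:R,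
    cong (3 ^+ m) v%:Z γ3 & cong b v%:Z γb]].
Proof.
pose K := (r.+1 + m)%N.
have hK : (r.+1 <= K)%N by apply: leq_addr.
have [inv hinv] := inv2_pow3 K.
have [q [k2 hq]] := two_pow_hits x3 (ltn0Sn r).
have [g hg_b] := cong_nat_rep γb b_gt0.
have [αp [hαp hreach]] := chain_reach b_cop6 b_gt0 (q :: nseq r 1) x g.
pose rest := nseq r 1 ++ αp.
have hx : cong (3 ^+ r.+1) x%:Z (back inv (q :: rest) γ3).
  have [k hk] := back_ones hinv αp γ3 (leq_trans (leqnSn r) hK).
  rewrite /= -/(back inv rest γ3) hk.
  have := cong_expn_le hK (congM (cong_refl _ x%:Z) (cong_2inv hinv q)).
  rewrite mulr1 exprMn mulrA (mulrC x%:Z) hq => /cong_sym h; apply: (cong_trans h).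
  by exists (k2 * inv ^+ q - k * inv ^+ q); rewrite exprS; ring.
have [t [uk [ht uk_gt0 hvs hσ hchain]]] := realize hO O_gt0 hg hw hK hinv x_gt0 hx.
exists (0%N :: t); split => //.
  by rewrite /len /= ht size_cat size_nseq -addSn leq_add2l.
exists uk; split => //.
- by rewrite /vs hvs mul1n.
- exact: cong_expn_le (leq_addl _ _) hσ.
- by apply: cong_trans hg_b; apply/cong_nat; apply: hreach.
Qed.

Let b_cop3 : coprimez b 3.
Proof. by rewrite coprimezE; case: (coprime6P b_cop6). Qed.

Let half_b : exists h : int, cong b (2 * h) 1.
Proof.
have odd_b : odd b by case: (coprime6P b_cop6); rewrite coprime_sym coprime2n.
by have [h hh] := half_exists odd_b; exists h; exists 1; rewrite hh; ring.
Qed.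

Let half_pow3 m : exists i : int, cong (3 ^+ m) (2 * i) 1.
Proof. by have [i hi] := inv2_pow3 m; exists i; exists 1; rewrite hi; ring. Qed.

(* Adding the residue modulo 2^j, one bit per additional T1- or T0-step:
   an odd target needs y ≡ (3γ + 1)/2 one level up, an even one v ≡ γ/2. *)
Lemma full_vector j : forall (m γ2 : nat) (γ3 γb : int), exists s, [/\ (0 < size s)%N,
  (len s <= r.+1 + b.-1 + j)%N & exists v : nat, [/\ (0 < v)%N, vs s x%:R = v%:R,
    cong (2 ^+ j) v%:Z γ2%:Z, cong (3 ^+ m) v%:Z γ3 & cong b v%:Z γb]].
Proof.
have [h hb2] := half_b.
elim: j => [|j IH] m γ2 γ3 γb.
  have [s [hs hlen [v [v_gt0 hvs hv3 hvb]]]] := core_vector m γ3 γb.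
  exists s; split => //; first by rewrite addn0.
  by exists v; split => //; exists (v%:Z - γ2%:Z); rewrite expr0; ring.
pose g := γ2./2.
case/boolP: (odd γ2) => hodd.
- have eγ : γ2%:Z = 2 * g%:Z + 1.
    by rewrite -PoszM -PoszD /g -{1}(odd_double_half γ2) hodd; congr Posz; lia.
  have [i hi] := half_pow3 m.+1.
  have [s [hs hlen [y [y_gt0 hys hy2 hy3 hyb]]]] :=
    IH m.+1 (3 * g + 2)%N ((3 * γ3 + 1) * i) ((3 * γb + 1) * h).
  have hy3' := double_residue hi hy3.
  have [u [u_gt0 huy]] : exists u : nat, (0 < u)%N /\ (3 * u + 1 = 2 * y)%N.
    apply: T1_preimage => //; apply: (cong_trans (cong_expn_le (isT : (1 <= m.+1)%N) hy3')).
    by exists γ3; rewrite expr1; ring.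
  have huy' : 3 * u%:Z + 1 = 2 * y%:Z by rewrite -!PoszM -PoszD huy.
  exists (0%N :: s); split => //; first by rewrite /len /= addnS -(prednK hs) ltnS.
  exists u; split => //; first exact: vs_T1 hys huy.
  + rewrite eγ; apply: cong_cancel3; first exact: coprimezXl.
    apply: T1_residue huy' _; rewrite exprS.
    by have := congZ 2 hy2; rewrite PoszD PoszM; congr cong; ring.
  + apply: (cong_mulK (c := 3)) => //; rewrite -exprS.
    exact: T1_residue huy' hy3'.
  + exact: cong_cancel3 b_cop3 (T1_residue huy' (double_residue hb2 hyb)).
- have eγ : γ2%:Z = 2 * g%:Z.
    by rewrite -PoszM /g -{1}(odd_double_half γ2) (negbTE hodd); congr Posz; lia.
  have [i hi] := half_pow3 m.
  have [[|s0 t] [//= _ hlen [v [v_gt0 hvs hv2 hv3 hvb]]]] := IH m g (γ3 * i) (γb * h).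
  exists (s0.+1 :: t); split => //; first by rewrite addnS; apply: leqW.
  exists (2 * v)%N; split; rewrite ?PoszM.
  + by rewrite muln_gt0.
  + exact: vs_T0 hvs.
  + by rewrite eγ exprS; apply: congZ.
  + exact: double_residue hi hv3.
  + exact: double_residue hb2 hvb.
Qed.

End Construction.

Lemma order32_gt1 b f : (1 < b)%N -> is_order32 b f -> (1 < f)%N.
Proof.
move=> b_gt1 [f_gt0 [hf _]]; case: f f_gt0 hf => [|[|f]] // _.
by rewrite !expn1 => /eqP; rewrite eqn_mod_dvd // dvdn1 => /eqP b1; rewrite b1 in b_gt1.
Qed.

Lemma length_bound b r f n : (r.+2 <= 2 * b)%N -> is_order32 b f ->
  (r.+1 + b.-1 + n <= 2 * (b - 1) * f + n + 1)%N.
Proof.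
move=> hr hf; case: (leqP b 1) => hb; first by lia.
have : (2 * (b - 1) * 2 <= 2 * (b - 1) * f)%N by rewrite leq_mul2l (order32_gt1 hb hf) orbT.
lia.
Qed.

Lemma crt_three (n m b v a : nat) : coprime b 6 -> cong (2 ^+ n) v%:Z a%:Z ->
  cong (3 ^+ m) v%:Z a%:Z -> cong b v%:Z a%:Z -> (v = a %[mod 2 ^ n * 3 ^ m * b])%N.
Proof.
move=> hb h2 h3 hb'; have [hb2 hb3] := coprime6P hb.
have cop23 : coprime (2 ^ n) (3 ^ m) by rewrite coprimeXl // coprimeXr.
have cop6b : coprime (2 ^ n * 3 ^ m) b.
  by rewrite coprimeMl; apply/andP; split; apply: coprimeXl; rewrite coprime_sym.
apply/eqP; rewrite !chinese_remainder //.
by apply/andP; split; [apply/andP; split|]; apply/eqP/cong_nat; rewrite ?PoszX.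
Qed.

Theorem mainTheorem4 (d n m b a f : nat)
  (hd : (1 < d)%N) (hdec : d = (2 ^ n * 3 ^ m * b)%N) (hb : coprime b 6)
  (ha : (a < d)%N) (hf : is_order32 b f) :
  forall x : nat, (0 < x)%N -> ~~ (3 %| x)%N ->
  exists s : seq nat, admissible x s /\
    (exists v : nat, vs s (x%:R)%R = (v%:R)%R /\ v = a %[mod d]) /\
    (len s <= 2 * (b - 1) * f + n + 1)%N.
Proof.
move=> x x_gt0 x3.
have b_gt0 : (0 < b)%N by case: b hb {hdec hf} => //; rewrite /coprime gcd0n.
have [O [r [w [O_gt0 hO hg hw hr]]]] := two_pow_decomposition (proj1 (coprime6P hb)) b_gt0.
have [s [s_gt0 hlen [v [v_gt0 hvs hv2 hv3 hvb]]]] :=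
  full_vector hb b_gt0 hO O_gt0 hg hw x_gt0 x3 n m a a a.
exists s; split; first by split=> //; exists v.
split; first by exists v; split=> //; rewrite hdec; apply: crt_three.
exact: leq_trans hlen (length_bound n hr hf).
Qed.
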